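(* Let $V$ be a finite nonempty set of voters and $A$ a finite set of alternatives. (i) If a consular election rule $F:\mathcal{P}(V,A)\to S_2(A)$ satisfies SPP and SPO, then its range graph $\mathcal{G}(F)$ satisfies edge-connectivity. (ii) Conversely, if $G$ is a graph on vertex set $A$ with at least one edge that satisfies edge-connectivity, then there exists a consular election rule $F:\mathcal{P}(V,A)\to S_2(A)$ satisfying SPP and SPO with $\mathcal{G}(F)=G$.
   Context: A profile assigns to each voter $i\in V$ a linear order $P_i$ on $A$; $P_i'P_{-i}$ replaces voter $i$'s order by $P_i'$. $S_2(A)$ is the set of 2-element subsets of $A$; a consular election rule is a map $F:\mathcal{P}(V,A)\to S_2(A)$. SPO: for all $P$, $i$, $P_i'$, $\mathrm{best}(P_i,F(P))\succeq_i\mathrm{best}(P_i,F(P_i'P_{-i}))$; SPP: same with $\mathrm{worst}$, where $\mathrm{best}(P_i,W)$, $\mathrm{worst}(P_i,W)$ are the $P_i$-best and $P_i$-worst elements of $W$. The range graph $\mathcal{G}(F)$ has vertex set $A$ and edge set equal to the range of $F$. A graph satisfies edge-connectivity if whenever $\{a,b\}$ and $\{c,d\}$ are edges with $a,b,c,d$ pairwise distinct, then $\{a,c\}$ or $\{a,d\}$ is an edge, and $\{b,c\}$ or $\{b,d\}$ is an edge. *)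

From mathcomp Require Import all_boot.
Set Implicit Arguments. Unset Strict Implicit. Unset Printing Implicit Defensive.

(* A (weak-reflexive form of a) linear order on A: x is weakly preferred to y. *)
Record lorder (A : finType) := LOrder {
  lo_rel :> rel A;
  lo_refl : reflexive lo_rel;
  lo_antisym : antisymmetric lo_rel;
  lo_trans : transitive lo_rel;
  lo_total : total lo_rel }.

Definition profile (V A : finType) := V -> lorder A.

Definition upd (V A : finType) (P : profile V A) (i : V) (Pi : lorder A)
  : profile V A := fun j => if j == i then Pi else P j.

Definition pair_set (A : finType) := {W : {set A} | #|W| == 2}.

Definition consular_rule (V A : finType) := profile V A -> pair_set A.

Definition is_best (A : finType) (R : lorder A) (W : {set A}) (x : A) :=
  x \in W /\ forall y, y \in W -> R x y.
Definition is_worst (A : finType) (R : lorder A) (W : {set A}) (x : A) :=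
  x \in W /\ forall y, y \in W -> R y x.

Definition SPO (V A : finType) (F : consular_rule V A) :=
  forall (P : profile V A) (i : V) (Pi' : lorder A) (x y : A),
    is_best (P i) (val (F P)) x -> is_best (P i) (val (F (upd P i Pi'))) y ->
    P i x y.

Definition SPP (V A : finType) (F : consular_rule V A) :=
  forall (P : profile V A) (i : V) (Pi' : lorder A) (x y : A),
    is_worst (P i) (val (F P)) x -> is_worst (P i) (val (F (upd P i Pi'))) y ->
    P i x y.

Definition is_graph (A : finType) (G : {set {set A}}) :=
  forall e, e \in G -> #|e| = 2.

Definition range_edge (V A : finType) (F : consular_rule V A) (e : {set A}) :=
  exists P : profile V A, val (F P) = e.

Definition edge_connectivity (A : finType) (E : {set A} -> Prop) :=
  forall a b c d : A,
    E [set a; b] -> E [set c; d] ->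
    a != b -> a != c -> a != d -> b != c -> b != d -> c != d ->
    (E [set a; c] \/ E [set a; d]) /\ (E [set b; c] \/ E [set b; d]).

From mathcomp Require Import all_boot.
From Stdlib Require Import FunctionalExtensionality ClassicalEpsilon.
Set Implicit Arguments. Unset Strict Implicit. Unset Printing Implicit Defensive.

(* (i) Let {a, b} = F P1 and {c, d} = F P2, and let L rank a first, then c
   and d.  Switching the voters of P1 one at a time to L keeps a in the
   outcome, since otherwise the deviator, switching back, would get a better
   best element, against SPO.  Switching the voters of P2 to L keeps the
   outcome inside the L-upper set {a, c, d}, by SPP.  Both walks end at the
   unanimous profile L, whose outcome is therefore {a, c} or {a, d}.
   (ii) A fixed voter with order L dictates the edge {a, b}, where a is her
   favourite vertex covered by G and b her favourite neighbour of a.  Its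
   best element beats that of any edge, and edge-connectivity gives every
   edge a vertex ranked below b, so its worst element beats that of any edge
   too: this is SPO and SPP.  Putting c and d on top selects {c, d}. *)

Section LinearOrders.
Variable A : finType.

Lemma lorder_trans (L : lorder A) x y z : L x y -> L y z -> L x z.
Proof. exact: (@lo_trans _ L y). Qed.

Lemma best_exists (L : lorder A) (W : {set A}) : W != set0 -> exists x, is_best L W x.
Proof.
case/set0Pn=> w wW.
have memW y : (y \in W) = (y \in sort L (enum W)) by rewrite mem_sort mem_enum.
have := sort_sorted (@lo_total _ L) (enum W).
move: memW; case: (sort _ _) => [|x s] memW; first by rewrite memW in wW.
move=> /= path_xs; have x_min := order_path_min (@lo_trans _ L) path_xs.
exists x; split=> [|y]; first by rewrite memW mem_head.
by rewrite memW inE => /predU1P [->|ys]; [apply: lo_refl | apply: (allP x_min)].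
Qed.

Definition converse_lorder (L : lorder A) : lorder A :=
  @LOrder A (fun x y => L y x) (@lo_refl _ L)
    (fun x y yx => esym (@lo_antisym _ L y x yx))
    (fun y x z xy yz => lorder_trans yz xy) (fun x y => @lo_total _ L y x).

Lemma worst_exists (L : lorder A) (W : {set A}) : W != set0 -> exists x, is_worst L W x.
Proof. exact: (best_exists (converse_lorder L)). Qed.

Definition lorder_of_inj (f : A -> nat) (f_inj : injective f) : lorder A :=
  @LOrder A (fun x y => f x <= f y) (fun x => leqnn _)
    (fun x y xy => f_inj x y (anti_leq xy)) (fun y x z => @leq_trans (f y) (f x) (f z))
    (fun x y => leq_total (f x) (f y)).

Definition prefix_rank (s : seq A) (x : A) : nat := index x (s ++ enum A).

Lemma prefix_rank_inj s : injective (prefix_rank s).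
Proof.
move=> x y; rewrite /prefix_rank => eq_xy.
have mem z : z \in s ++ enum A by rewrite mem_cat mem_enum orbT.
by rewrite -(nth_index x (mem x)) eq_xy nth_index.
Qed.

Lemma prefix_rank_lt s x : (prefix_rank s x < size s) = (x \in s).
Proof.
rewrite /prefix_rank index_cat; case: ifP => [xs|_]; first by rewrite index_mem.
by rewrite ltnNge leq_addr.
Qed.

Definition prefer (s : seq A) : lorder A := lorder_of_inj (@prefix_rank_inj s).

Lemma prefer_head x s z : prefer (x :: s) x z.
Proof. by rewrite /= /prefix_rank /= eqxx. Qed.

Lemma prefer_upper s x y : y \in s -> prefer s x y -> x \in s.
Proof. by rewrite /= -!prefix_rank_lt => ys xy; apply: leq_ltn_trans xy ys. Qed.

End LinearOrders.

Lemma set2_other (A : finType) (e : {set A}) a :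
  #|e| = 2 -> a \in e -> exists2 y, y != a & e = [set a; y].
Proof.
move/eqP/cards2P=> [x [y [xy ->]]]; rewrite !inE => /orP[] /eqP ->.
  by exists y; rewrite // eq_sym.
by exists x; rewrite // setUC.
Qed.

Lemma pair_set_card (A : finType) (W : pair_set A) : #|val W| = 2.
Proof. exact/eqP/(valP W). Qed.

Lemma pair_set_neq0 (A : finType) (W : pair_set A) : val W != set0.
Proof. by rewrite -card_gt0 pair_set_card. Qed.

Section Profiles.
Variables V A : finType.

Lemma upd_same (P : profile V A) i L : upd P i L i = L.
Proof. by rewrite /upd eqxx. Qed.

Lemma upd_upd_self (P : profile V A) i L : upd (upd P i L) i (P i) = P.
Proof. by apply: functional_extensionality => j; rewrite /upd; case: eqP => [->|]. Qed.

Lemma upd_ind (L : lorder A) (Pr : profile V A -> Prop) :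
  (forall Q i, Pr Q -> Pr (upd Q i L)) -> forall P, Pr P -> Pr (fun _ => L).
Proof.
move=> Pr_upd P PrP.
have Pr_switched (s : seq V) : Pr (fun j => if j \in s then L else P j).
  elim: s => [|i s IHs]; first by congr Pr: PrP; apply: functional_extensionality.
  have := Pr_upd _ i IHs; congr Pr; apply: functional_extensionality => j.
  by rewrite /upd inE; case: eqP.
have := Pr_switched (enum V); congr Pr; apply: functional_extensionality => j.
by rewrite mem_enum.
Qed.

Lemma dictatorship_strategyproof (sel : lorder A -> {set A} -> A -> Prop)
    (v0 : V) (g : lorder A -> pair_set A) :
  (forall L W x y, sel L W x -> sel L W y -> L x y) ->
  (forall L L' x y, sel L (val (g L)) x -> sel L (val (g L')) y -> L x y) ->
  forall (P : profile V A) i L' x y,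
    sel (P i) (val (g (P v0))) x -> sel (P i) (val (g (upd P i L' v0))) y -> P i x y.
Proof.
move=> sel_unique g_dominant P i L' x y; rewrite /upd.
by case: eqP => [<-|_]; [apply: g_dominant | apply: sel_unique].
Qed.

End Profiles.

Section RangeGraph.
Variables (V A : finType) (F : consular_rule V A).

Lemma SPO_keeps_top (L : lorder A) a : SPO F -> (forall z, L a z) ->
  forall Q i, a \in val (F Q) -> a \in val (F (upd Q i L)).
Proof.
move=> F_SPO a_top Q i aQ.
have [x x_best] := best_exists (upd Q i L i) (pair_set_neq0 (F (upd Q i L))).
have a_best : is_best (upd Q i L i) (val (F (upd (upd Q i L) i (Q i)))) a.
  by rewrite upd_upd_self upd_same.
have := F_SPO _ i (Q i) x a x_best a_best; rewrite upd_same => xa.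
have <- : x = a by apply: (@lo_antisym _ L); rewrite xa a_top.
by case: x_best.
Qed.

Lemma SPP_keeps_upper (L : lorder A) (S : {set A}) : SPP F ->
  (forall x y, y \in S -> L x y -> x \in S) ->
  forall Q i, val (F Q) \subset S -> val (F (upd Q i L)) \subset S.
Proof.
move=> F_SPP S_upper Q i QS.
have [x x_worst] := worst_exists (upd Q i L i) (pair_set_neq0 (F (upd Q i L))).
have [y y_worst] := worst_exists (upd Q i L i) (pair_set_neq0 (F Q)).
have y_worst' : is_worst (upd Q i L i) (val (F (upd (upd Q i L) i (Q i)))) y.
  by rewrite upd_upd_self.
have := F_SPP _ i (Q i) x y x_worst y_worst'; rewrite upd_same => xy.
have xS : x \in S by apply: S_upper xy; apply: (subsetP QS); case: y_worst.
case: x_worst => _; rewrite upd_same => x_worst.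
by apply/subsetP => z /x_worst; apply: S_upper.
Qed.

Lemma range_edge_extend a c d (P1 P2 : profile V A) : SPP F -> SPO F ->
  a \in val (F P1) -> val (F P2) = [set c; d] ->
  range_edge F [set a; c] \/ range_edge F [set a; d].
Proof.
move=> F_SPP F_SPO aP1 P2E.
pose L := prefer [:: a; c; d]; pose S := [set x in [:: a; c; d]].
have a_in := upd_ind (SPO_keeps_top F_SPO (@prefer_head _ a [:: c; d])) aP1.
have S_upper x y : y \in S -> L x y -> x \in S by rewrite !in_set; apply: prefer_upper.
have P2S : val (F P2) \subset S.
  by rewrite P2E; apply/subsetP => z; rewrite in_set !inE => /orP[]/eqP->; rewrite eqxx !orbT.
have LS := upd_ind (SPP_keeps_upper F_SPP S_upper) P2S.
have [z za E] := set2_other (pair_set_card _) a_in.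
have := subsetP LS z; rewrite E set22 in_set !inE (negbTE za) /= => /(_ isT) /orP[] /eqP zE.
  by left; exists (fun _ => L); rewrite E zE.
by right; exists (fun _ => L); rewrite E zE.
Qed.

Lemma SPP_SPO_edge_connectivity : SPP F -> SPO F -> edge_connectivity (range_edge F).
Proof.
move=> F_SPP F_SPO a b c d [P1 P1E] [P2 P2E] *.
by split; apply: (range_edge_extend (P1 := P1) F_SPP F_SPO _ P2E); rewrite P1E ?set21 ?set22.
Qed.

End RangeGraph.

Section DominantEdge.
Variables (A : finType) (G : {set {set A}}).
Hypotheses (G_graph : is_graph G) (G_ec : edge_connectivity (fun e => e \in G)).

Definition dominant (L : lorder A) (W : {set A}) :=
  W \in G /\ forall W', W' \in G ->
    (forall x y, is_best L W x -> is_best L W' y -> L x y) /\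
    (forall x y, is_worst L W x -> is_worst L W' y -> L x y).

Lemma graph_edge_neq x y : [set x; y] \in G -> x != y.
Proof. by move/G_graph; case: eqP => [->|//]; rewrite setUid cards1. Qed.

Section FavouriteEdge.
Variables (L : lorder A) (a b : A).
Hypotheses (a_top : forall e y, e \in G -> y \in e -> L a y)
  (ab_edge : [set a; b] \in G) (b_top : forall y, [set a; y] \in G -> L b y).

Lemma edge_meets_below W : W \in G -> exists2 z, z \in W & L b z.
Proof.
move=> WG; have [aW|aNW] := boolP (a \in W).
  have [o _ WE] := set2_other (G_graph WG) aW.
  by exists o; [rewrite WE set22 | apply: b_top; rewrite -WE].
have [bW|bNW] := boolP (b \in W); first by exists b; last apply: lo_refl.
have /cards2P [c [d [cd WE]]] : #|W| == 2 by rewrite G_graph.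
have neq x y : x \notin W -> y \in W -> x != y by move=> xW yW; apply: contraNneq xW => ->.
have [c_in d_in] : c \in W /\ d \in W by rewrite WE set21 set22.
have cdG : [set c; d] \in G by rewrite -WE.
have [[ac|ad] _] := G_ec ab_edge cdG (graph_edge_neq ab_edge)
  (neq _ _ aNW c_in) (neq _ _ aNW d_in) (neq _ _ bNW c_in) (neq _ _ bNW d_in) cd.
  by exists c; last apply: b_top.
by exists d; last apply: b_top.
Qed.

Lemma favourite_edge_dominant : dominant L [set a; b].
Proof.
split=> // W WG; split=> [x y [_ x_best] [yW _] | x y [xab _] [yW y_worst]].
  exact: lorder_trans (x_best a (set21 a b)) (a_top WG yW).
have [z zW bz] := edge_meets_below WG.
move: xab; rewrite !inE => /orP[] /eqP ->; first exact: a_top WG yW.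
exact: lorder_trans bz (y_worst z zW).
Qed.

End FavouriteEdge.

Lemma dominant_exists (L : lorder A) : G != set0 -> exists W, dominant L W.
Proof.
case/set0Pn=> e eG.
have [a [/bigcupP [e' e'G ae'] a_top]] : exists a, is_best L (\bigcup_(e in G) e) a.
  apply: best_exists; have /set0Pn [x xe] : e != set0 by rewrite -card_gt0 G_graph.
  by apply/set0Pn; exists x; apply/bigcupP; exists e.
have [b [ab_edge b_top]] : exists b, is_best L [set y | [set a; y] \in G] b.
  have [o _ E] := set2_other (G_graph e'G) ae'.
  by apply: best_exists; apply/set0Pn; exists o; rewrite inE -E.
exists [set a; b]; apply: favourite_edge_dominant.
- by move=> e'' y e''G ye''; apply: a_top; apply/bigcupP; exists e''.
- by rewrite inE in ab_edge.
- by move=> y ay; apply: b_top; rewrite inE.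
Qed.

Lemma dominant_prefer c d W :
  [set c; d] \in G -> dominant (prefer [:: c; d]) W -> W = [set c; d].
Proof.
move=> cdG [WG W_dom]; pose L := prefer [:: c; d].
have [x x_worst] : exists x, is_worst L W x.
  by apply: worst_exists; rewrite -card_gt0 G_graph.
have d_worst : is_worst L [set c; d] d.
  by split=> [|z]; rewrite ?set22 // !inE => /orP[] /eqP ->; [apply: prefer_head | apply: lo_refl].
have xd := (W_dom _ cdG).2 x d x_worst d_worst.
have W_sub : W \subset [set c; d].
  apply/subsetP => z zW; have zd := lorder_trans (x_worst.2 z zW) xd.
  by have := prefer_upper (mem_last c [:: d]) zd; rewrite !inE.
by apply/eqP; rewrite eqEcard W_sub (G_graph WG) (G_graph cdG).
Qed.

Section Dictatorship.
Hypothesis G_nonempty : G != set0.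
Variables (V : finType) (v0 : V).

Definition dominant_edge (L : lorder A) : {set A} :=
  proj1_sig (constructive_indefinite_description _ (dominant_exists L G_nonempty)).

Lemma dominant_edgeP L : dominant L (dominant_edge L).
Proof. exact: proj2_sig. Qed.

Definition dominant_pair (L : lorder A) : pair_set A :=
  exist _ (dominant_edge L) (introT eqP (G_graph (dominant_edgeP L).1)).

Definition dictatorship : consular_rule V A := fun P => dominant_pair (P v0).

Lemma dictatorship_SPO : SPO dictatorship.
Proof.
apply: (@dictatorship_strategyproof _ _ (@is_best A) v0 dominant_pair).
  by move=> L W x y [_ x_best] [yW _]; apply: x_best yW.
by move=> L L'; apply: ((dominant_edgeP L).2 _ (dominant_edgeP L').1).1.
Qed.

Lemma dictatorship_SPP : SPP dictatorship.
Proof.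
apply: (@dictatorship_strategyproof _ _ (@is_worst A) v0 dominant_pair).
  by move=> L W x y [xW _] [_ y_worst]; apply: y_worst xW.
by move=> L L'; apply: ((dominant_edgeP L).2 _ (dominant_edgeP L').1).2.
Qed.

Lemma range_dictatorship e : range_edge dictatorship e <-> e \in G.
Proof.
split=> [[P <-] | eG]; first exact: (dominant_edgeP _).1.
have /cards2P [c [d [_ E]]] : #|e| == 2 by rewrite G_graph.
exists (fun _ => prefer [:: c; d]); rewrite E.
by apply: dominant_prefer; [rewrite -E | apply: dominant_edgeP].
Qed.

End Dictatorship.

End DominantEdge.

Theorem proposition35 (V A : finType) (hV : 0 < #|V|) :
  (forall F : consular_rule V A,
     SPP F -> SPO F -> edge_connectivity (range_edge F)) /\
  (forall G : {set {set A}},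
     is_graph G -> G != set0 -> edge_connectivity (fun e => e \in G) ->
     exists F : consular_rule V A,
       [/\ SPP F, SPO F & forall e, range_edge F e <-> e \in G]).
Proof.
split=> [F | G G_graph G_nonempty G_ec]; first exact: SPP_SPO_edge_connectivity.
have [v0 _] := card_gt0P hV.
exists (dictatorship G_graph G_ec G_nonempty v0).
by split; [apply: dictatorship_SPP | apply: dictatorship_SPO | apply: range_dictatorship].
Qed.
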